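(* Let $\mathbf{H}_1,\mathbf{H}_2$ be complex Hilbert spaces with $\mathbf{H}_1$ separable with orthonormal basis $(\psi_j)_{j\ge0}$, $H=\mathbf{H}_1\otimes\mathbf{H}_2$, $\mathcal{A}:H\to H$ bounded linear, $\varphi\in H$. Let $y_1,\dots,y_n\in\mathbf{H}_2$ with $\langle y_i,y_j\rangle_2=\delta_{ij}$ and let $k_1,\dots,k_n\in\mathbf{H}_2$ be linearly independent with $\langle k_i,y_j\rangle_2=\delta_{ij}$. Assume $\|\mathcal{A}\mathcal{P}_k\|<1$ and $\tilde{\mathcal{P}}_k\sum_{i=0}^{\infty}(\mathcal{A}\mathcal{P}_k)^i\varphi=0$. Then there exists $\delta>0$ such that for every $\varepsilon$ with $|\varepsilon|<\delta$ and every $\eta_1,\dots,\eta_n\in\mathbf{H}_2$ with $\|\eta_i\|=1$ and $\langle\eta_i,y_j\rangle_2=0$ for all $i,j$, setting $k'_i=k_i+\varepsilon\eta_i$, the series $x':=\sum_{i=0}^{\infty}(\mathcal{A}\mathcal{P}_{k'})^i\varphi$ converges and $\tilde{\mathcal{P}}_{k'}x'=0$. If moreover $k'_1,\dots,k'_n$ are linearly independent, then $x'$ solves $\mathcal{A}x'+\varphi=x'$ subject to the constraints $\langle x',y_i\rangle_{2'}=0$ for $i=1,\dots,n$ (equivalently $\langle x',\psi_j\otimes y_i\rangle=0$ for all $j\ge0$, $1\le i\le n$).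
   Context: $H=\mathbf{H}_1\otimes\mathbf{H}_2$ is the Hilbert tensor product with inner product $\langle\cdot,\cdot\rangle$; $\langle\cdot,\cdot\rangle_1,\langle\cdot,\cdot\rangle_2$ are the inner products of $\mathbf{H}_1,\mathbf{H}_2$ (linear in the first argument). The partial inner product $\langle\cdot,\cdot\rangle_{2'}:H\times\mathbf{H}_2\to\mathbf{H}_1$ is determined by $\langle\langle x,y\rangle_{2'},z\rangle_1=\langle x,z\otimes y\rangle$ for all $x\in H$, $y\in\mathbf{H}_2$, $z\in\mathbf{H}_1$. For $u_1,\dots,u_n\in\mathbf{H}_2$: $\mathcal{P}_u x=x-\sum_{i=1}^n\langle x,y_i\rangle_{2'}\otimes u_i$ and $\tilde{\mathcal{P}}_u x=\sum_{i=1}^n\langle x,y_i\rangle_{2'}\otimes u_i$. $\|\cdot\|$ is the operator norm. *)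

From mathcomp Require Import all_boot all_order all_algebra.
From mathcomp Require Import classical_sets reals.
From mathcomp Require Export complex.
Set Implicit Arguments. Unset Strict Implicit. Unset Printing Implicit Defensive.
Import Order.TTheory GRing.Theory Num.Theory.
Local Open Scope ring_scope.
Local Open Scope classical_set_scope.

Section Hilbert.
Variables (R : realType) (V : lmodType R[i]) (ip : V -> V -> R[i]).

Definition hnorm (x : V) : R := Num.sqrt (complex.Re (ip x x)).

Definition hconv (u : nat -> V) (l : V) : Prop :=
  forall e : R, 0 < e -> exists N : nat, forall m : nat, (N <= m)%N ->
    hnorm (u m - l) < e.

Definition hcauchy (u : nat -> V) : Prop :=
  forall e : R, 0 < e -> exists N : nat, forall m p : nat,
    (N <= m)%N -> (N <= p)%N -> hnorm (u m - u p) < e.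

Definition hseries (u : nat -> V) (s : V) : Prop :=
  hconv (fun m => \sum_(i < m) u i) s.

Record is_hilbert : Prop := {
  ip_linear : forall (a : R[i]) (x y z : V), ip (a *: x + y) z = a * ip x z + ip y z;
  ip_conjsym : forall x y : V, ip y x = complex.conjc (ip x y);
  ip_pos : forall x : V, 0 <= ip x x;
  ip_definite : forall x : V, ip x x = 0 -> x = 0;
  ip_complete : forall u : nat -> V, hcauchy u -> exists l, hconv u l }.

Definition bounded_linear (T : V -> V) : Prop :=
  (forall (a : R[i]) (x y : V), T (a *: x + y) = a *: T x + T y) /\
  exists M : R, forall x, hnorm (T x) <= M * hnorm x.

Definition opnorm (T : V -> V) : R :=
  sup [set r : R | exists x : V, hnorm x <= 1 /\ r = hnorm (T x)].

End Hilbert.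

Definition lin_indep (R : realType) (V : lmodType R[i]) (n : nat) (k : 'I_n -> V) :
  Prop :=
  forall c : 'I_n -> R[i], \sum_(i < n) c i *: k i = 0 -> forall i, c i = 0.

(* Hilbert tensor product H = H1 (x) H2, characterised up to unitary
   isomorphism: a bilinear map tens with <a(x)b, c(x)d> = <a,c>_1 <b,d>_2
   whose range has dense span (equivalently: only 0 is orthogonal to all
   elementary tensors). *)
Definition is_hilbert_tensor (R : realType)
  (H1 : lmodType R[i]) (ip1 : H1 -> H1 -> R[i])
  (H2 : lmodType R[i]) (ip2 : H2 -> H2 -> R[i])
  (H : lmodType R[i]) (ip : H -> H -> R[i]) (tens : H1 -> H2 -> H) : Prop :=
  [/\ forall (a : R[i]) (x x' : H1) (y : H2), tens (a *: x + x') y = a *: tens x y + tens x' y,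
      forall (a : R[i]) (x : H1) (y y' : H2), tens x (a *: y + y') = a *: tens x y + tens x y',
      forall (x x' : H1) (y y' : H2), ip (tens x y) (tens x' y') = ip1 x x' * ip2 y y'
    & forall z : H, (forall (x : H1) (y : H2), ip z (tens x y) = 0) -> z = 0].

(* the partial inner product <.,.>_{2'} : H x H2 -> H1, determined by
   < <x,y>_{2'}, z >_1 = < x, z (x) y > *)
Definition is_partial_ip (R : realType)
  (H1 : lmodType R[i]) (ip1 : H1 -> H1 -> R[i])
  (H2 : lmodType R[i]) (H : lmodType R[i]) (ip : H -> H -> R[i])
  (tens : H1 -> H2 -> H) (pip : H -> H2 -> H1) : Prop :=
  forall (x : H) (y : H2) (z : H1), ip1 (pip x y) z = ip x (tens z y).

Definition Ptilde (R : realType) (H1 H2 H : lmodType R[i])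
  (tens : H1 -> H2 -> H) (pip : H -> H2 -> H1) (n : nat) (y u : 'I_n -> H2) (x : H) : H :=
  \sum_(i < n) tens (pip x (y i)) (u i).

Definition Pu (R : realType) (H1 H2 H : lmodType R[i])
  (tens : H1 -> H2 -> H) (pip : H -> H2 -> H1) (n : nat) (y u : 'I_n -> H2) (x : H) : H :=
  x - Ptilde tens pip y u x.

Definition neumann_term (R : realType) (H1 H2 H : lmodType R[i])
  (tens : H1 -> H2 -> H) (pip : H -> H2 -> H1) (n : nat) (y u : 'I_n -> H2)
  (A : H -> H) (phi : H) (i : nat) : H :=
  iter i (fun x => A (Pu tens pip y u x)) phi.

(** Write [T_u x := A (P_u x)].  Pairing [Ptilde_k x] with [z (x) y_j] and using
    [<k_i, y_j>_2 = delta_ij] shows that the Neumann sum [x] of [T_k], for which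
    [Ptilde_k x = 0], satisfies [<x, y_j>_{2'} = 0] for every [j].  Hence [P_u x = x]
    for every [u], so the fixed point [x = phi + A x] of [z |-> phi + T_k z] is also a
    fixed point of [z |-> phi + T_{k'} z].  As [T_{k'} - T_k = - eps A Ptilde_eta] has
    norm at most [|eps| ||A|| sum_i ||y_i||], [T_{k'}] is still a contraction for small
    [eps], and the Neumann series of a contraction converges to its fixed point: the
    perturbed series converges to the same [x], which satisfies all the constraints. *)

From HB Require Import structures.
From mathcomp Require Import all_boot all_order all_algebra.
From mathcomp Require Import classical_sets reals topology normedtype sequences.
From mathcomp Require Import complex.
From mathcomp Require Import ring lra.
Import Order.TTheory GRing.Theory Num.Theory numFieldNormedType.Exports.
Set Implicit Arguments. Unset Strict Implicit. Unset Printing Implicit Defensive.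
Local Open Scope ring_scope.
Local Open Scope complex_scope.

Section LinearFunctions.
Variables (K : pzRingType) (U W : lmodType K) (f : U -> W).
Hypothesis f_lin : linear f.

Let fL : {linear U -> W} := HB.pack f (GRing.isLinear.Build _ _ _ _ f f_lin).

Lemma linear_fun0 : f 0 = 0. Proof. exact: (raddf0 fL). Qed.
Lemma linear_funD x y : f (x + y) = f x + f y. Proof. exact: (raddfD fL). Qed.
Lemma linear_funB x y : f (x - y) = f x - f y. Proof. exact: (raddfB fL). Qed.
Lemma linear_funZ a x : f (a *: x) = a *: f x. Proof. exact: (linearZZ fL). Qed.
Lemma linear_fun_sum (I : Type) (r : seq I) (F : I -> U) :
  f (\sum_(i <- r) F i) = \sum_(i <- r) f (F i).
Proof. exact: (raddf_sum fL). Qed.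
End LinearFunctions.

Lemma Re_realCM (R : realType) (r : R) (x : R[i]) :
  complex.Re (r%:C * x) = r * complex.Re x.
Proof. by case: x => a b /=; rewrite mul0r subr0. Qed.

Lemma ger0_ReE (R : realType) (x : R[i]) : 0 <= x -> (complex.Re x)%:C = x.
Proof. by move=> x_ge0; move: x x_ge0 (ger0_Im x_ge0) => [a b] _ /= ->. Qed.

Lemma geometric_lt_eventually (R : realType) (c K e : R) :
  0 <= c -> c < 1 -> 0 <= K -> 0 < e ->
  exists N : nat, forall m, (N <= m)%N -> c ^+ m * K < e.
Proof.
move=> c_ge0 c_lt1 K_ge0 e_gt0; have normc_lt1 : `|c| < 1 by rewrite ger0_norm.
have eK_gt0 : 0 < e / (K + 1) by rewrite divr_gt0 // ltr_wpDl.
have [N _ hN] := proj1 (cvgrPdist_lt _ _) (cvg_expr normc_lt1) _ eK_gt0.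
exists N => m /hN; rewrite /= sub0r normrN ger0_norm ?exprn_ge0 // => hm.
rewrite (le_lt_trans _ (_ : c ^+ m * (K + 1) < e)) ?ler_wpM2l ?exprn_ge0 ?lerDl //.
by rewrite -ltr_pdivlMr // ltr_wpDl.
Qed.

Section InnerProduct.
Variables (R : realType) (V : lmodType R[i]) (ip : V -> V -> R[i]).
Hypothesis hV : is_hilbert ip.
Local Notation nrm := (hnorm ip).

Lemma ip_linear_l z : linear (fun x => ip x z : R[i]^o).
Proof. by move=> a x x'; apply: ip_linear. Qed.

Lemma ip0l z : ip 0 z = 0. Proof. exact: linear_fun0 (ip_linear_l z). Qed.
Lemma ipDl x x' z : ip (x + x') z = ip x z + ip x' z.
Proof. exact: linear_funD (ip_linear_l z) x x'. Qed.
Lemma ipBl x x' z : ip (x - x') z = ip x z - ip x' z.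
Proof. exact: linear_funB (ip_linear_l z) x x'. Qed.
Lemma ipZl a x z : ip (a *: x) z = a * ip x z.
Proof. exact: linear_funZ (ip_linear_l z) a x. Qed.
Lemma ip_suml (I : Type) (r : seq I) (F : I -> V) z :
  ip (\sum_(i <- r) F i) z = \sum_(i <- r) ip (F i) z.
Proof. exact: (linear_fun_sum (ip_linear_l z) r F). Qed.

Lemma ip0r z : ip z 0 = 0. Proof. by rewrite (ip_conjsym hV) ip0l conjc0. Qed.
Lemma ipDr x x' z : ip z (x + x') = ip z x + ip z x'.
Proof. by rewrite (ip_conjsym hV) ipDl rmorphD /= -!(ip_conjsym hV). Qed.
Lemma ipZr a x z : ip z (a *: x) = conjc a * ip z x.
Proof. by rewrite (ip_conjsym hV) ipZl rmorphM /= -!(ip_conjsym hV). Qed.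

Lemma ip_orthogonal_eq0 x : (forall z, ip x z = 0) -> x = 0.
Proof. by move=> x_perp; apply: (ip_definite hV). Qed.

Lemma Re_ipC x y : complex.Re (ip x y) = complex.Re (ip y x).
Proof. by rewrite (ip_conjsym hV); case: (ip y x). Qed.

Lemma Re_ip_ge0 x : 0 <= complex.Re (ip x x).
Proof. by have := ip_pos hV x; rewrite lecE => /andP[]. Qed.

Lemma hnorm_ge0 x : 0 <= nrm x. Proof. exact: sqrtr_ge0. Qed.

Lemma hnorm_sqr x : nrm x ^+ 2 = complex.Re (ip x x).
Proof. by rewrite sqr_sqrtr // Re_ip_ge0. Qed.

Lemma hnorm0 : nrm 0 = 0. Proof. by rewrite /hnorm ip0l sqrtr0. Qed.

Lemma hnorm_eq0 x : nrm x = 0 -> x = 0.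
Proof.
move=> x0; apply: (ip_definite hV).
by rewrite -(ger0_ReE (ip_pos hV x)) -hnorm_sqr x0 expr0n.
Qed.

Lemma hnorm_gt0 x : nrm x != 0 -> 0 < nrm x.
Proof. by rewrite lt_def hnorm_ge0 andbT. Qed.

Lemma hnorm_small_eq0 x : (forall e, 0 < e -> nrm x < e) -> x = 0.
Proof.
move=> x_small; apply: hnorm_eq0; apply/eqP/negPn/negP => /hnorm_gt0/x_small.
by rewrite ltxx.
Qed.

Lemma Re_ip_combination r x s y :
  complex.Re (ip (r%:C *: x + s%:C *: y) (r%:C *: x + s%:C *: y)) =
  r ^+ 2 * complex.Re (ip x x) + 2 * r * s * complex.Re (ip x y)
    + s ^+ 2 * complex.Re (ip y y).
Proof.
rewrite !ipDl !ipDr !ipZl !ipZr !conjc_real !raddfD /= !Re_realCM (Re_ipC y x).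
ring.
Qed.

Lemma cauchy_schwarz x y : complex.Re (ip x y) <= nrm x * nrm y.
Proof.
have [x0|/hnorm_gt0 x_gt0] := eqVneq (nrm x) 0.
  by rewrite (hnorm_eq0 x0) ip0l hnorm0 mul0r.
have [y0|/hnorm_gt0 y_gt0] := eqVneq (nrm y) 0.
  by rewrite (hnorm_eq0 y0) ip0r hnorm0 mulr0.
have := Re_ip_ge0 ((nrm y)%:C *: x + (- nrm x)%:C *: y).
rewrite Re_ip_combination -!hnorm_sqr => h.
have xy_gt0 := mulr_gt0 x_gt0 y_gt0.
by rewrite -(ler_pM2l xy_gt0); nra.
Qed.

Lemma hnormD x y : nrm (x + y) <= nrm x + nrm y.
Proof.
rewrite -(ler_pXn2r (isT : (0 < 2)%N)) ?nnegrE ?addr_ge0 ?hnorm_ge0 //.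
have := Re_ip_combination 1 x 1 y; rewrite !scale1r hnorm_sqr => ->.
have := cauchy_schwarz x y; rewrite sqrrD -!hnorm_sqr; nra.
Qed.

Lemma hnormZ r x : nrm (r%:C *: x) = `|r| * nrm x.
Proof.
rewrite /hnorm ipZl ipZr conjc_real mulrA -rmorphM Re_realCM.
by rewrite sqrtrM ?sqr_ge0 // -expr2 sqrtr_sqr.
Qed.

Lemma hnormN x : nrm (- x) = nrm x.
Proof. by rewrite -scaleN1r -(rmorphN1 (real_complex R)) hnormZ normrN1 mul1r. Qed.

Lemma hnormB x y : nrm (x - y) = nrm (y - x).
Proof. by rewrite -hnormN opprB. Qed.

Lemma hnorm_sum (I : Type) (r : seq I) (F : I -> V) :
  nrm (\sum_(i <- r) F i) <= \sum_(i <- r) nrm (F i).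
Proof.
elim: r => [|a r IH]; first by rewrite !big_nil hnorm0.
by rewrite !big_cons (le_trans (hnormD _ _)) // lerD2l.
Qed.

End InnerProduct.

Section NeumannSeries.
Variables (R : realType) (V : lmodType R[i]) (ip : V -> V -> R[i]).
Hypothesis hV : is_hilbert ip.
Local Notation nrm := (hnorm ip).
Variables (T : V -> V) (c : R) (phi : V).
Hypotheses (T_lin : linear T) (c_ge0 : 0 <= c) (c_lt1 : c < 1).
Hypothesis T_contr : forall x, nrm (T x) <= c * nrm x.

Let S m := \sum_(i < m) iter i T phi.

Lemma iter_contr m x : nrm (iter m T x) <= c ^+ m * nrm x.
Proof.
elim: m => [|m IH]; first by rewrite expr0 mul1r.
by rewrite iterS exprS -mulrA (le_trans (T_contr _)) // ler_wpM2l.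
Qed.

Lemma neumann_partial_sumS m : S m.+1 = phi + T (S m).
Proof. by rewrite /S big_ord_recl (linear_fun_sum T_lin). Qed.

Lemma neumann_partial_sum_le m : nrm (S m) <= nrm phi / (1 - c).
Proof.
have c1_gt0 : 0 < 1 - c by rewrite subr_gt0.
rewrite ler_pdivlMr //; elim: m => [|m IH].
  by rewrite /S big_ord0 hnorm0 // mul0r hnorm_ge0.
rewrite neumann_partial_sumS.
apply: le_trans (_ : (nrm phi + c * nrm (S m)) * (1 - c) <= _).
  by rewrite ler_pM2r // (le_trans (hnormD hV _ _)) // lerD2l.
have := ler_wpM2l c_ge0 IH; nra.
Qed.

Lemma neumann_partial_sum_shift m j : S (m + j) - S m = iter m T (S j).
Proof.
elim: m => [|m IH]; first by rewrite add0n /S big_ord0 subr0.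
by rewrite addSn !neumann_partial_sumS opprD addrACA subrr add0r -(linear_funB T_lin) IH.
Qed.

Lemma neumann_partial_sum_cauchy : hcauchy ip S.
Proof.
move=> e e_gt0; have K_ge0 : 0 <= nrm phi / (1 - c).
  by rewrite divr_ge0 ?hnorm_ge0 // subr_ge0 ltW.
have [N hN] := geometric_lt_eventually c_ge0 c_lt1 K_ge0 e_gt0.
suff tail m p : (N <= m)%N -> (m <= p)%N -> nrm (S p - S m) < e.
  exists N => m p Nm Np; have [mp|/ltnW pm] := leqP m p; last exact: tail.
  by rewrite (hnormB hV); apply: tail.
move=> Nm mp; rewrite -(subnKC mp) neumann_partial_sum_shift.
apply: le_lt_trans (iter_contr _ _) (le_lt_trans _ (hN m Nm)).
by rewrite ler_wpM2l ?exprn_ge0 ?neumann_partial_sum_le.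
Qed.

Lemma neumann_series_exists : exists l, hseries ip (fun i => iter i T phi) l.
Proof. exact: (ip_complete hV) neumann_partial_sum_cauchy. Qed.

Lemma neumann_series_fixed l : hseries ip (fun i => iter i T phi) l -> l = phi + T l.
Proof.
move=> S_l; apply/eqP; rewrite -subr_eq0; apply/eqP/(hnorm_small_eq0 hV) => e e_gt0.
have [N hN] := S_l (e / 2) (divr_gt0 e_gt0 (ltr0n _ 2)).
have e1 := hN N.+1 (leqnSn N); have e2 := hN N (leqnn N).
have -> : l - (phi + T l) = (l - S N.+1) + T (S N - l).
  by rewrite neumann_partial_sumS (linear_funB T_lin) !opprD !addrA subrK.
apply: le_lt_trans (hnormD hV _ _) _; rewrite (hnormB hV).
have := T_contr (S N - l).
have := ler_wpM2r (hnorm_ge0 ip (S N - l)) (ltW c_lt1).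
rewrite /S mul1r in e1 e2 *; lra.
Qed.

Lemma neumann_series_of_fixed x : x = phi + T x -> hseries ip (fun i => iter i T phi) x.
Proof.
move=> x_fix e e_gt0.
have [N hN] := geometric_lt_eventually c_ge0 c_lt1 (hnorm_ge0 ip x) e_gt0.
exists N => m Nm; rewrite -/(S m) (hnormB hV).
have -> : x - S m = iter m T x.
  elim: m {Nm} => [|m IH]; first by rewrite /S big_ord0 subr0.
  by rewrite neumann_partial_sumS {1}x_fix opprD addrACA subrr add0r -(linear_funB T_lin) IH.
exact: le_lt_trans (iter_contr _ _) (hN m Nm).
Qed.

End NeumannSeries.

Lemma hnorm_le_opnorm (R : realType) (V : lmodType R[i]) (ip : V -> V -> R[i])
    (hV : is_hilbert ip) (T : V -> V) (M : R) :
  linear T -> 0 <= M -> (forall x, hnorm ip (T x) <= M * hnorm ip x) ->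
  forall x, hnorm ip (T x) <= opnorm ip T * hnorm ip x.
Proof.
move=> T_lin M_ge0 T_bound x.
set E := [set r : R | exists x : V, hnorm ip x <= 1 /\ r = hnorm ip (T x)]%classic.
have E_sup : has_sup E.
  split; first by exists (hnorm ip (T 0)), 0; rewrite hnorm0 ?ler01.
  exists M => r [z [z_le1 ->]].
  by rewrite (le_trans (T_bound z)) // ler_piMr.
have [x0|/hnorm_gt0 x_gt0] := eqVneq (hnorm ip x) 0.
  by rewrite (hnorm_eq0 hV x0) (linear_fun0 T_lin) hnorm0 ?mulr0.
set u := (hnorm ip x)^-1%:C *: x.
have normu : hnorm ip u = 1 by rewrite hnormZ // ger0_norm ?invr_ge0 ?hnorm_ge0 ?mulVf ?gt_eqF.
have : hnorm ip (T u) <= opnorm ip T.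
  by apply: sup_upper_bound => //; exists u; rewrite normu.
rewrite (linear_funZ T_lin) hnormZ // ger0_norm ?invr_ge0 ?hnorm_ge0 //.
by rewrite -ler_pdivrMr // mulrC.
Qed.

Lemma bounded_linear_ge0 (R : realType) (V : lmodType R[i]) (ip : V -> V -> R[i])
    (T : V -> V) :
  bounded_linear ip T -> exists2 M : R, 0 <= M & forall x, hnorm ip (T x) <= M * hnorm ip x.
Proof.
case=> _ [M T_bound]; exists (Num.max M 0) => [|x]; first by rewrite le_max lexx orbT.
by rewrite (le_trans (T_bound x)) // ler_wpM2r ?hnorm_ge0 // le_max lexx.
Qed.

Lemma contraction_of_opnorm_lt1 (R : realType) (V : lmodType R[i]) (ip : V -> V -> R[i])
    (T : V -> V) :
  (forall x, hnorm ip (T x) <= opnorm ip T * hnorm ip x) -> opnorm ip T < 1 ->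
  exists2 c : R, 0 <= c < 1 & forall x, hnorm ip (T x) <= c * hnorm ip x.
Proof.
move=> T_opnorm T_lt1; exists (Num.max (opnorm ip T) 0).
  by rewrite le_max lexx orbT gt_max T_lt1 ltr01.
by move=> x; rewrite (le_trans (T_opnorm x)) // ler_wpM2r ?hnorm_ge0 // le_max lexx.
Qed.

Lemma perturbation_margin (R : realType) (c B : R) : c < 1 -> 0 <= B ->
  exists2 delta : R, 0 < delta & forall e : R, `|e| < delta -> c + `|e| * B < 1.
Proof.
move=> c_lt1 B_ge0; have B1_gt0 : 0 < B + 1 by rewrite ltr_wpDl.
exists ((1 - c) / (B + 1)) => [|e]; first by rewrite divr_gt0 ?subr_gt0.
by rewrite ltr_pdivlMr //; have := normr_ge0 e; lra.
Qed.

Section TensorConstraints.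
Variables (R : realType) (H1 H2 H : lmodType R[i]).
Variables (ip1 : H1 -> H1 -> R[i]) (ip2 : H2 -> H2 -> R[i]) (ip : H -> H -> R[i]).
Hypotheses (hH1 : is_hilbert ip1) (hH2 : is_hilbert ip2) (hH : is_hilbert ip).
Variables (tens : H1 -> H2 -> H) (pip : H -> H2 -> H1).
Hypotheses (htens : is_hilbert_tensor ip1 ip2 ip tens) (hpip : is_partial_ip ip1 ip tens pip).
Variables (n : nat) (y : 'I_n -> H2).
Local Notation nrm := (hnorm ip).
Local Notation Pt := (Ptilde tens pip y).
Local Notation P := (Pu tens pip y).

Lemma tens_linear_l b : linear (tens ^~ b).
Proof. by case: htens => tl _ _ _ s x x'; apply: tl. Qed.

Lemma tens_linear_r a : linear (tens a).
Proof. by case: htens => _ tr _ _ s x x'; apply: tr. Qed.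

Lemma ip_tens a a' b b' : ip (tens a b) (tens a' b') = ip1 a a' * ip2 b b'.
Proof. by case: htens. Qed.

Lemma pip_linear b : linear (pip ^~ b).
Proof.
move=> s x x'; apply/eqP; rewrite -subr_eq0; apply/eqP/(ip_orthogonal_eq0 hH1) => z.
by rewrite (ipBl hH1) hpip (ip_linear hH) (ip_linear hH1) !hpip subrr.
Qed.

Lemma hnorm_tens a b : nrm (tens a b) = hnorm ip1 a * hnorm ip2 b.
Proof.
rewrite /hnorm ip_tens -(ger0_ReE (ip_pos hH1 a)) -(ger0_ReE (ip_pos hH2 b)).
by rewrite -rmorphM sqrtrM // Re_ip_ge0.
Qed.

Lemma hnorm_pip_le x b : hnorm ip1 (pip x b) <= nrm x * hnorm ip2 b.
Proof.
have [p0|/hnorm_gt0 p_gt0] := eqVneq (hnorm ip1 (pip x b)) 0.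
  by rewrite p0 mulr_ge0 ?hnorm_ge0.
rewrite -(ler_pM2r p_gt0) -expr2 (hnorm_sqr hH1) hpip -mulrA [_ * hnorm ip1 _]mulrC.
by rewrite -hnorm_tens cauchy_schwarz.
Qed.

Lemma Ptilde_linear u : linear (Pt u).
Proof.
move=> s x x'; rewrite /Ptilde scaler_sumr -big_split; apply: eq_bigr => i _.
by rewrite pip_linear tens_linear_l.
Qed.

Lemma Pu_linear u : linear (P u).
Proof. by move=> s x x'; rewrite /Pu Ptilde_linear scalerBr opprD addrACA. Qed.

Lemma hnorm_Ptilde_le u x :
  nrm (Pt u x) <= nrm x * \sum_(i < n) hnorm ip2 (y i) * hnorm ip2 (u i).
Proof.
rewrite (le_trans (hnorm_sum hH _ _)) // mulr_sumr; apply: ler_sum => i _.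
by rewrite hnorm_tens mulrA ler_wpM2r ?hnorm_ge0 ?hnorm_pip_le.
Qed.

Lemma Ptilde_perturb (k eta : 'I_n -> H2) (e : R[i]) x :
  Pt (fun i => k i + e *: eta i) x = Pt k x + e *: Pt eta x.
Proof.
rewrite /Ptilde scaler_sumr -big_split; apply: eq_bigr => i _.
by rewrite addrC tens_linear_r addrC.
Qed.

Lemma pip_eq0_of_Ptilde (k : 'I_n -> H2) x :
  (forall i j, ip2 (k i) (y j) = (i == j)%:R) ->
  Pt k x = 0 -> forall j, pip x (y j) = 0.
Proof.
move=> k_dual Ptx0 j; apply: (ip_orthogonal_eq0 hH1) => z.
rewrite -[RHS](ip0l hH (tens z (y j))) -Ptx0 /Ptilde (ip_suml hH).
under eq_bigr do rewrite ip_tens k_dual.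
by rewrite (bigD1 j) //= eqxx mulr1 big1 ?addr0 // => i /negbTE ->; rewrite mulr0.
Qed.

Lemma Ptilde_eq0 u x : (forall j, pip x (y j) = 0) -> Pt u x = 0.
Proof.
by move=> x_perp; rewrite /Ptilde big1 // => i _; rewrite x_perp (linear_fun0 (tens_linear_l _)).
Qed.

Lemma Pu_id u x : (forall j, pip x (y j) = 0) -> P u x = x.
Proof. by move=> x_perp; rewrite /Pu Ptilde_eq0 ?subr0. Qed.

Section Perturbation.
Variables (A : H -> H) (M : R).
Hypotheses (A_lin : linear A) (M_ge0 : 0 <= M).
Hypothesis A_bound : forall x, nrm (A x) <= M * nrm x.

Lemma APu_linear u : linear (fun x => A (P u x)).
Proof. by move=> s x x'; rewrite Pu_linear A_lin. Qed.

Lemma hnorm_APu_le u x :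
  nrm (A (P u x)) <= M * (1 + \sum_(i < n) hnorm ip2 (y i) * hnorm ip2 (u i)) * nrm x.
Proof.
rewrite -mulrA (le_trans (A_bound _)) // ler_wpM2l // mulrDl mul1r.
by rewrite (le_trans (hnormD hH _ _)) // (hnormN hH) lerD2l mulrC hnorm_Ptilde_le.
Qed.

Lemma hnorm_APu_le_opnorm u x :
  nrm (A (P u x)) <= opnorm ip (fun x => A (P u x)) * nrm x.
Proof.
apply: (hnorm_le_opnorm hH (APu_linear u) _ (hnorm_APu_le u)).
by rewrite mulr_ge0 // addr_ge0 // sumr_ge0 // => i _; rewrite mulr_ge0 ?hnorm_ge0.
Qed.

Lemma hnorm_APu_perturb_le (k eta : 'I_n -> H2) (c e : R) :
  (forall i, hnorm ip2 (eta i) <= 1) ->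
  (forall x, nrm (A (P k x)) <= c * nrm x) ->
  forall x, nrm (A (P (fun i => k i + e%:C *: eta i) x))
    <= (c + `|e| * (M * \sum_(i < n) hnorm ip2 (y i))) * nrm x.
Proof.
move=> eta_le1 APk_contr x.
rewrite /Pu Ptilde_perturb opprD addrA -/(P k x) -scaleNr -rmorphN.
rewrite (linear_funD A_lin) (linear_funZ A_lin) mulrDl.
rewrite (le_trans (hnormD hH _ _)) // lerD ?APk_contr // (hnormZ hH) normrN -!mulrA.
rewrite ler_wpM2l // (le_trans (A_bound _)) // ler_wpM2l // mulrC.
rewrite (le_trans (hnorm_Ptilde_le _ _)) // ler_wpM2l ?hnorm_ge0 //.
by apply: ler_sum => i _; rewrite ler_piMr ?hnorm_ge0.
Qed.

Lemma neumann_series_perturb (k eta : 'I_n -> H2) (c e : R) (phi x : H) :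
  0 <= c -> c + `|e| * (M * \sum_(i < n) hnorm ip2 (y i)) < 1 ->
  (forall i, hnorm ip2 (eta i) <= 1) ->
  (forall x, nrm (A (P k x)) <= c * nrm x) ->
  (forall j, pip x (y j) = 0) -> x = phi + A x ->
  hseries ip (neumann_term tens pip y (fun i => k i + e%:C *: eta i) A phi) x.
Proof.
move=> c_ge0 c'_lt1 eta_le1 APk_contr x_perp x_fix.
apply: (neumann_series_of_fixed hH (APu_linear (fun i => k i + e%:C *: eta i)) _ c'_lt1).
- by rewrite addr_ge0 // !mulr_ge0 // sumr_ge0 // => i _; rewrite hnorm_ge0.
- exact: hnorm_APu_perturb_le.
- by rewrite Pu_id.
Qed.

End Perturbation.
End TensorConstraints.

Theorem corollary2 (R : realType)
  (H1 : lmodType R[i]) (ip1 : H1 -> H1 -> R[i]) (hH1 : is_hilbert ip1)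
  (psi : nat -> H1)
  (psi_on : forall j l : nat, ip1 (psi j) (psi l) = (j == l)%:R)
  (psi_total : forall x : H1, (forall j, ip1 x (psi j) = 0) -> x = 0)
  (H2 : lmodType R[i]) (ip2 : H2 -> H2 -> R[i]) (hH2 : is_hilbert ip2)
  (H : lmodType R[i]) (ip : H -> H -> R[i]) (hH : is_hilbert ip)
  (tens : H1 -> H2 -> H) (htens : is_hilbert_tensor ip1 ip2 ip tens)
  (pip : H -> H2 -> H1) (hpip : is_partial_ip ip1 ip tens pip)
  (A : H -> H) (hA : bounded_linear ip A) (phi : H)
  (n : nat) (y k : 'I_n -> H2)
  (y_on : forall i j, ip2 (y i) (y j) = (i == j)%:R)
  (k_indep : lin_indep k)
  (k_dual : forall i j, ip2 (k i) (y j) = (i == j)%:R)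
  (hnormAP : opnorm ip (fun x => A (Pu tens pip y k x)) < 1)
  (hx0 : forall x0 : H, hseries ip (neumann_term tens pip y k A phi) x0 ->
           Ptilde tens pip y k x0 = 0) :
  exists2 delta : R, 0 < delta &
    forall (eps : R) (eta : 'I_n -> H2),
      `|eps| < delta ->
      (forall i, hnorm ip2 (eta i) = 1) ->
      (forall i j, ip2 (eta i) (y j) = 0) ->
      let k' := fun i => k i + (eps%:C)%C *: eta i in
      exists x' : H,
        [/\ hseries ip (neumann_term tens pip y k' A phi) x',
            Ptilde tens pip y k' x' = 0
          & lin_indep k' ->
            [/\ A x' + phi = x',
                forall i, pip x' (y i) = 0
              & forall (j : nat) (i : 'I_n), ip x' (tens (psi j) (y i)) = 0]].
Proof.
have [M M_ge0 A_bound] := bounded_linear_ge0 hA; case: hA => A_lin _.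
have APu_lin := APu_linear hH1 hH htens hpip y A_lin.
have [c /andP[c_ge0 c_lt1] APk_contr] := contraction_of_opnorm_lt1
  (hnorm_APu_le_opnorm hH1 hH2 hH htens hpip y A_lin M_ge0 A_bound k) hnormAP.
have [x0 x0_sum] := neumann_series_exists hH phi (APu_lin k) c_ge0 c_lt1 APk_contr.
have x0_perp := pip_eq0_of_Ptilde hH1 hH htens k_dual (hx0 x0 x0_sum).
have x0_fix : x0 = phi + A x0.
  rewrite {1}(neumann_series_fixed hH (APu_lin k) c_lt1 APk_contr x0_sum).
  by rewrite (Pu_id htens k x0_perp).
have B_ge0 : 0 <= M * \sum_(i < n) hnorm ip2 (y i).
  by rewrite mulr_ge0 // sumr_ge0 // => i _; rewrite hnorm_ge0.
have [delta delta_gt0 c'_lt1] := perturbation_margin c_lt1 B_ge0.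
exists delta => // eps eta eps_small eta_unit _ k'; exists x0; split.
- apply: (neumann_series_perturb hH1 hH2 hH htens hpip A_lin M_ge0 A_bound c_ge0
    (c'_lt1 _ eps_small) _ APk_contr x0_perp x0_fix).
  by move=> i; rewrite eta_unit.
- exact: (Ptilde_eq0 htens k' x0_perp).
- move=> _; split => [|//|j i]; first by rewrite addrC -x0_fix.
  by rewrite -hpip x0_perp (ip0l hH1).
Qed.
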